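(* Let $G$ and $H$ be finite simple graphs, where $G$ has no isolated vertices and $\gamma_t(G)=2\gamma(G)$. Let $S$ be a dominating set of $G$ of minimum cardinality $\gamma(G)$ and let $S'$ be a dominating set of $H$ of minimum cardinality with $|S'|=2$. Then $S\times S'$ is a dominating set of minimum cardinality of the lexicographic product $G\circ H$.
   Context: A set $D\subseteq V(G)$ is a dominating set if every vertex outside $D$ has a neighbor in $D$; $\gamma(\cdot)$ denotes the minimum cardinality of a dominating set. A set $D_t$ is a total dominating set if every vertex of the graph is adjacent to a vertex of $D_t$; $\gamma_t(G)$ is the minimum cardinality of a total dominating set (defined for graphs without isolated vertices). The lexicographic product $G\circ H$ has vertex set $V(G)\times V(H)$, with $(a,x)$ adjacent to $(b,y)$ iff either $\{a,b\}\in E(G)$, or $a=b$ and $\{x,y\}\in E(H)$. *)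

From mathcomp Require Import all_boot.
Set Implicit Arguments. Unset Strict Implicit. Unset Printing Implicit Defensive.

Definition simple_graph (T : finType) (e : rel T) : Prop :=
  symmetric e /\ irreflexive e.

Definition dominating (T : finType) (e : rel T) (D : {set T}) : bool :=
  [forall x, (x \in D) || [exists y in D, e x y]].

Definition total_dominating (T : finType) (e : rel T) (D : {set T}) : bool :=
  [forall x, [exists y in D, e x y]].

Definition no_isolated (T : finType) (e : rel T) : Prop :=
  forall x, exists y, e x y.

(* domination number: minimum size of a dominating set (setT always dominates,
   so the default #|T| never exceeds the true minimum). *)
Definition gamma (T : finType) (e : rel T) : nat :=
  \big[minn/#|T|]_(D : {set T} | dominating e D) #|D|.

(* total domination number; meaningful when there are no isolated vertices
   (then setT is total dominating, so the default #|T| is harmless). *)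
Definition gamma_t (T : finType) (e : rel T) : nat :=
  \big[minn/#|T|]_(D : {set T} | total_dominating e D) #|D|.

Definition lexprod (T1 T2 : finType) (e1 : rel T1) (e2 : rel T2) : rel (T1 * T2) :=
  fun u v => e1 u.1 v.1 || ((u.1 == v.1) && e2 u.2 v.2).

From mathcomp Require Import all_boot all_order.
Set Implicit Arguments. Unset Strict Implicit. Unset Printing Implicit Defensive.
Import Order.TTheory.

(* A dominating set D of G o H projects onto a dominating set P of G. A vertex
   a of P with no G-neighbour in P can only be dominated inside its own copy of
   H, so the fibre of D over a dominates H and has at least gamma(H) >= 2
   elements. Adding one G-neighbour of each such a to P therefore gives a total
   dominating set of G of size at most |D|. Hence
   gamma(G o H) >= gamma_t(G) = 2 gamma(G) = |S x S'|, while S x S' clearly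
   dominates G o H. *)

Section DominationNumbers.

Variables (T : finType) (e : rel T).

Lemma dominatingT : dominating e [set: T].
Proof. by apply/forallP => x; rewrite inE. Qed.

Lemma gamma_le_card (D : {set T}) : dominating e D -> gamma e <= #|D|.
Proof. by move=> domD; rewrite /gamma -minEnat -leEnat bigmin_le_cond. Qed.

Lemma gamma_t_le_card (D : {set T}) : total_dominating e D -> gamma_t e <= #|D|.
Proof. by move=> domD; rewrite /gamma_t -minEnat -leEnat bigmin_le_cond. Qed.

Lemma leq_gamma m : (forall D, dominating e D -> m <= #|D|) -> m <= gamma e.
Proof.
move=> lb; rewrite /gamma -minEnat -leEnat; apply: le_bigmin => [|D /lb //].
by rewrite -cardsT; apply: lb dominatingT.
Qed.

Definition isolated_in (P : {set T}) : {set T} :=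
  [set a in P | ~~ [exists b in P, e a b]].

Lemma gamma_t_le_dominating (P : {set T}) :
  no_isolated e -> dominating e P -> gamma_t e <= #|P| + #|isolated_in P|.
Proof.
move=> noiso /forallP domP.
pose f a := odflt a [pick b | e a b].
have e_f a : e a (f a).
  by rewrite /f; case: pickP => [//|/= none]; have [b] := noiso a; rewrite none.
pose Q := P :|: f @: isolated_in P.
have totQ : total_dominating e Q.
  apply/forallP => v; case: (boolP (v \in P)) => [vP | vNP].
    case: (boolP [exists b in P, e v b]) => [/existsP [b /andP [bP evb]] | isov].
      by apply/existsP; exists b; rewrite inE bP.
    apply/existsP; exists (f v); rewrite e_f andbT inE imset_f ?orbT //.
    by rewrite inE vP.
  have /existsP [b /andP [bP evb]] : [exists b in P, e v b].
    by move: (domP v); rewrite (negbTE vNP).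
  by apply/existsP; exists b; rewrite inE bP.
apply: leq_trans (gamma_t_le_card totQ) _.
by rewrite (leq_trans (leq_card_setU _ _)) // leq_add2l leq_imset_card.
Qed.

End DominationNumbers.

Section LexicographicProduct.

Variables (V W : finType) (eG : rel V) (eH : rel W).

Definition fiber (D : {set V * W}) (a : V) : {set W} := [set y | (a, y) \in D].

Lemma card_sum_fiber (D : {set V * W}) : #|D| = \sum_a #|fiber D a|.
Proof.
rewrite -sum1_card (partition_big fst predT) //=.
apply: eq_bigr => a _; rewrite -sum1_card.
rewrite (reindex (pair a)) /=; last first.
  by exists snd => [y _ // | [b y] /andP [_ /eqP /= ->]].
by apply: eq_bigl => y; rewrite inE eqxx andbT.
Qed.

Lemma leq_card_fst_add (D : {set V * W}) (L : {set V}) :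
  (forall a, a \in L -> 1 < #|fiber D a|) -> #|fst @: D| + #|L| <= #|D|.
Proof.
move=> big_fibers.
rewrite card_sum_fiber -!sum1_card big_mkcond [X in _ + X]big_mkcond -big_split /=.
apply: leq_sum => a _; rewrite addnC; case: ifP => [aL | _].
  by rewrite add1n (leq_trans _ (big_fibers a aL)) //; case: ifP.
rewrite add0n; case: ifP => // /imsetP [[b y] dD /= ->].
by rewrite card_gt0; apply/set0Pn; exists y; rewrite inE.
Qed.

Lemma dominatingX (S : {set V}) (S' : {set W}) :
  S' != set0 -> dominating eG S -> dominating eH S' ->
  dominating (lexprod eG eH) (setX S S').
Proof.
case/set0Pn => y0 y0S' /forallP domS /forallP domS'; apply/forallP => [[a x]].
have /orP [aS | /existsP [b /andP [bS eab]]] := domS a.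
  have /orP [xS' | /existsP [y /andP [yS' exy]]] := domS' x.
    by rewrite in_setX aS xS'.
  apply/orP; right; apply/existsP; exists (a, y).
  by rewrite in_setX aS yS' /lexprod /= eqxx exy orbT.
apply/orP; right; apply/existsP; exists (b, y0).
by rewrite in_setX bS y0S' /lexprod /= eab.
Qed.

Variable D : {set V * W}.
Hypothesis domD : dominating (lexprod eG eH) D.

Lemma dominating_fst (w0 : W) : dominating eG (fst @: D).
Proof.
apply/forallP => a; have /orP [aD | /existsP [d /andP [dD]]] := forallP domD (a, w0).
  by rewrite (imset_f fst aD).
case/orP => [ead | /andP [/eqP /= -> _]]; last by rewrite imset_f.
by apply/orP; right; apply/existsP; exists d.1; rewrite ead imset_f.
Qed.

Lemma fiber_dominating a :
  a \in isolated_in eG (fst @: D) -> dominating eH (fiber D a).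
Proof.
rewrite inE => /andP [_ isoa]; apply/forallP => x.
have /orP [axD | /existsP [d /andP [dD]]] := forallP domD (a, x).
  by rewrite inE axD.
case/orP => [ead | /andP [/eqP /= ad exd]].
  by case/negP: isoa; apply/existsP; exists d.1; rewrite ead imset_f.
apply/orP; right; apply/existsP; exists d.2.
by rewrite exd inE ad -surjective_pairing dD.
Qed.

Lemma gamma_t_le_lexprod_dominating :
  no_isolated eG -> 1 < gamma eH -> gamma_t eG <= #|D|.
Proof.
move=> noiso gammaH.
have /card_gt0P [w0 _] : 0 < #|W|.
  by rewrite -cardsT (leq_trans _ (gamma_le_card (dominatingT eH))) // ltnW.
apply: leq_trans (gamma_t_le_dominating noiso (dominating_fst w0)) _.
apply: leq_card_fst_add => a isoa.
exact: leq_trans gammaH (gamma_le_card (fiber_dominating isoa)).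
Qed.

End LexicographicProduct.

Theorem mainTheorem8 (V W : finType) (eG : rel V) (eH : rel W)
  (S : {set V}) (S' : {set W}) :
  simple_graph eG -> simple_graph eH ->
  no_isolated eG ->
  gamma_t eG = 2 * gamma eG ->
  dominating eG S -> #|S| = gamma eG ->
  dominating eH S' -> #|S'| = gamma eH -> #|S'| = 2 ->
  dominating (lexprod eG eH) (setX S S') /\
  #|setX S S'| = gamma (lexprod eG eH).
Proof.
move=> _ _ noiso gammaGt domS cardS domS' cardS' cardS'2.
have gammaH : 1 < gamma eH by rewrite -cardS' cardS'2.
have S'_neq0 : S' != set0 by rewrite -card_gt0 cardS'2.
split; first exact: dominatingX.
apply/eqP; rewrite eqn_leq gamma_le_card ?dominatingX // andbT.
rewrite cardsX cardS'2 cardS mulnC -gammaGt.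
apply: leq_gamma => D domD.
exact: gamma_t_le_lexprod_dominating domD noiso gammaH.
Qed.
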